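(* Let $Q$ be a finite commutative A-loop of odd order, and define $x\circ y = \big(x^{-1}\backslash (xy^2)\big)^{1/2}$. A subloop $K$ of $(Q,\circ)$ is a subloop of $Q$ if and only if $K\varphi = K$ for each $\varphi\in \mathrm{Inn}(Q)\cap\langle L_x : x\in K\rangle$.
   Context: A loop is a set with a binary operation and neutral element $1$ in which all left translations $L_x:y\mapsto xy$ and right translations are bijections; $\mathrm{Mlt}(Q)$ is the group they generate and $\mathrm{Inn}(Q)$ the stabilizer of $1$ in it. A commutative A-loop is a commutative loop all of whose inner mappings are automorphisms. $x\backslash y$ is the unique $z$ with $xz=y$, $x^{-1}=x\backslash 1$. In a finite commutative loop of odd order the squaring map is a bijection, and $z^{1/2}$ denotes the unique $w$ with $w^2=z$; $(Q,\circ)$ is then a loop. $\langle L_x : x\in K\rangle$ is the subgroup of $\mathrm{Mlt}(Q)$ generated by the left translations of $Q$ by elements of $K$. *)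

From mathcomp Require Import all_boot all_order all_fingroup.
Set Implicit Arguments. Unset Strict Implicit. Unset Printing Implicit Defensive.
Local Open Scope group_scope.

Section Loops.
Variable T : finType.
Variable mul : T -> T -> T.
Variable one : T.

Definition is_loop : Prop :=
  (forall x, mul one x = x /\ mul x one = x) /\
  (forall x, bijective (mul x)) /\ (forall x, bijective (fun y => mul y x)).

Definition is_commutative : Prop := forall x y, mul x y = mul y x.

(* translations as permutations (identity if not injective; never happens in a loop) *)
Definition Lperm (x : T) : {perm T} :=
  match injectiveb (mul x) as b return injectiveb (mul x) = b -> {perm T} with
  | true => fun H => perm (injectiveP _ H)
  | false => fun _ => 1
  end erefl.

Definition Rperm (x : T) : {perm T} :=
  match injectiveb (fun y => mul y x) as b
        return injectiveb (fun y => mul y x) = b -> {perm T} with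
  | true => fun H => perm (injectiveP _ H)
  | false => fun _ => 1
  end erefl.

Definition Mlt : {set {perm T}} :=
  <<[set Lperm x | x in T] :|: [set Rperm x | x in T]>>.

Definition Inn : {set {perm T}} := [set p in Mlt | p one == one].

Definition Lgen (K : {set T}) : {set {perm T}} := <<[set Lperm x | x in K]>>.

Definition is_comm_Aloop : Prop :=
  [/\ is_loop, is_commutative &
      forall p, p \in Inn -> forall x y, p (mul x y) = mul (p x) (p y)].

(* x \ y, x^{-1}, z^{1/2} (uniquely determined in the situation of the paper) *)
Definition ldiv (x y : T) : T := odflt y [pick z | mul x z == y].
Definition linv (x : T) : T := ldiv x one.
Definition sqrt (z : T) : T := odflt z [pick w | mul w w == z].

Definition circ (x y : T) : T := sqrt (ldiv (linv x) (mul x (mul y y))).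
End Loops.

Definition is_subloop (T : finType) (m : T -> T -> T) (K : {set T}) : Prop :=
  [/\ K != set0,
      (forall x y, x \in K -> y \in K -> m x y \in K),
      (forall x y z, x \in K -> y \in K -> m x z = y -> z \in K) &
      (forall x y z, x \in K -> y \in K -> m z x = y -> z \in K)].

(* Squaring is a bijection (a fixed point of the involution y |-> y \ z is a
   square root of z), and the inner mappings L(x, y) = L_{xy}^-1 L_x L_y are
   automorphisms; evaluating L(a, a^-1), L(a^-1, a) and L(a, a) at powers of
   a shows that x o x = x^2, x o x^-1 = 1 and 1 o y = y.  A subloop K of
   (Q, o) is therefore closed under inverses, squares and square roots, and
   (x o k^(1/2))^2 = x^-1 \ (x k).  If the maps L(x, x^-1) and L(x, x) in
   Inn(Q) /\ <L_x : x in K> stabilise K, the first turns x^-1 \ (x k) into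
   x (x k) and the second then yields x^2 k in K, hence x k in K by taking
   square roots; the divisions follow by finiteness.  Conversely every element
   of <L_x : x in K> stabilises a subloop K of Q. *)
From Pilot Require Import Defs.
From mathcomp Require Import all_boot all_order all_fingroup.
From mathcomp Require Import cyclic pgroup sylow.
Set Implicit Arguments. Unset Strict Implicit. Unset Printing Implicit Defensive.
Local Open Scope group_scope.

Lemma involutive_fixpoint (T : finType) (f : T -> T) :
  involutive f -> odd #|T| -> exists x, f x = x.
Proof.
move=> fK oddT; pose s := perm (inv_inj fK).
have s_2group : 2.-group <[s]>.
  apply: pnat_dvd (pnat_id (isT : prime 2)).
  by rewrite order_dvdn; apply/eqP/permP => x; rewrite expgS expg1 permM !permE /= fK.
have acts_T : [acts <[s]>, on [set: T] | 'P] by apply/actsP => a _ x; rewrite !inE.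
have := pgroup_fix_mod s_2group acts_T; rewrite cardsT.
have [-> | [x]] := set_0Vmem 'Fix_([set: T] | 'P)(<[s]>).
  by rewrite cards0 modn2 oddT.
rewrite inE => /andP[_ /afixP /(_ s (cycle_id s))] /= sx _.
by exists x; rewrite -[RHS]sx apermE permE.
Qed.

Lemma inj_stable_imset (T : finType) (f : T -> T) (K : {set T}) :
  injective f -> {in K, forall k, f k \in K} -> f @: K = K.
Proof.
move=> f_inj fK; apply/eqP; rewrite eqEcard card_imset // leqnn andbT.
by apply/subsetP => _ /imsetP[k kK ->]; apply: fK.
Qed.

Section CommutativeLoop.
Variables (T : finType) (mul : T -> T -> T) (one : T).
Hypotheses (loopQ : is_loop mul one) (mulC : is_commutative mul).

Local Notation inv := (linv mul one).
Local Notation ldiv := (ldiv mul).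
Local Notation sq x := (mul x x).

Lemma mul1x x : mul one x = x. Proof. by case: loopQ => /(_ x)[]. Qed.
Lemma mulx1 x : mul x one = x. Proof. by case: loopQ => /(_ x)[]. Qed.

Lemma mulI x : injective (mul x).
Proof. by case: loopQ => _ [/(_ x) /bij_inj]. Qed.

Lemma LpermE x y : Lperm mul x y = mul x y.
Proof.
rewrite /Lperm; move: (erefl (injectiveb (mul x))).
case: {2 3}(injectiveb (mul x)) => [? | /negbT/injectiveP[]]; first by rewrite permE.
exact: mulI.
Qed.

Lemma ldivK x y : mul x (ldiv x y) = y.
Proof.
rewrite /Defs.ldiv; case: pickP => [z /eqP // | no_z].
case: loopQ => _ [/(_ x)[g _ gK] _].
by move: (no_z (g y)); rewrite gK eqxx.
Qed.

Lemma mulKl x y : ldiv x (mul x y) = y.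
Proof. by apply: (@mulI x); rewrite ldivK. Qed.

Lemma ldiv1x y : ldiv one y = y.
Proof. by rewrite -{1}[y]mul1x mulKl. Qed.

Lemma mulxV x : mul x (inv x) = one. Proof. exact: ldivK. Qed.
Lemma mulVx x : mul (inv x) x = one. Proof. by rewrite mulC mulxV. Qed.

Lemma linvK x : inv (inv x) = x.
Proof. by apply: (@mulI (inv x)); rewrite mulxV mulVx. Qed.

Lemma linv1 : inv one = one.
Proof. by rewrite /linv -{2}(mulx1 one) mulKl. Qed.

Lemma Lperm_Mlt x : Lperm mul x \in Mlt mul.
Proof. by rewrite mem_gen // inE imset_f. Qed.

Lemma Lperm_Lgen (K : {set T}) x : x \in K -> Lperm mul x \in Lgen mul K.
Proof. by move=> xK; rewrite mem_gen // imset_f. Qed.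

Lemma subloop_Lgen_stable (K : {set T}) :
  is_subloop mul K -> {in Lgen mul K, forall phi : {perm T}, phi @: K = K}.
Proof.
case=> _ mulK divl _ phi phiK.
have Lgen_norm : Lgen mul K \subset 'N(K | 'P).
  rewrite gen_subG; apply/subsetP => _ /imsetP[x xK ->].
  apply/astabsP => y; rewrite /= apermE LpermE.
  by apply/idP/idP => [xyK | /(mulK x y xK)]; first exact: divl xK xyK erefl.
rewrite -{2}(astabs_setact (subsetP Lgen_norm _ phiK)).
by apply: eq_imset.
Qed.

(* L(x, y) = L_{xy}^-1 L_x L_y; permutations compose left to right. *)
Definition Lin (x y : T) : {perm T} :=
  Lperm mul y * Lperm mul x * (Lperm mul (mul x y))^-1.

Lemma LinE x y z : Lin x y z = ldiv (mul x y) (mul x (mul y z)).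
Proof.
rewrite !permM !LpermE; apply: (@mulI (mul x y)).
by rewrite -LpermE permKV ldivK.
Qed.

Lemma Lin_Inn x y : Lin x y \in Inn mul one.
Proof.
by rewrite inE !groupM ?groupV ?Lperm_Mlt //= LinE mulx1 -{2}(mulx1 (mul x y)) mulKl.
Qed.

Lemma Lin_Lgen (K : {set T}) x y :
  x \in K -> y \in K -> mul x y \in K -> Lin x y \in Lgen mul K.
Proof. by move=> xK yK xyK; rewrite !groupM ?groupV ?Lperm_Lgen. Qed.

Lemma LinxV x z : Lin x (inv x) z = mul x (mul (inv x) z).
Proof. by rewrite LinE mulxV ldiv1x. Qed.

Lemma LinVx x z : Lin (inv x) x z = mul (inv x) (mul x z).
Proof. by rewrite LinE mulVx ldiv1x. Qed.

Section AutomorphicInnerMappings.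
Hypothesis InnA : forall p, p \in Inn mul one -> forall x y, p (mul x y) = mul (p x) (p y).

Lemma LinM x y a b : Lin x y (mul a b) = mul (Lin x y a) (Lin x y b).
Proof. exact/InnA/Lin_Inn. Qed.

Lemma linv_mul_sq a : mul (inv a) (sq a) = a.
Proof.
have fix_a : Lin a (inv a) a = a by rewrite LinxV mulVx mulx1.
by apply: (@mulI a); rewrite -LinxV LinM fix_a.
Qed.

Lemma mul_mul_sq x : mul x (mul x (sq x)) = sq (sq x).
Proof.
have fix_x : Lin x x x = x by rewrite LinE [mul x (sq x)]mulC mulKl.
by rewrite -[LHS](ldivK (sq x)) -LinE LinM fix_x.
Qed.

Lemma linv_mul_mul_sq x : mul (inv x) (mul x (mul x (sq x))) = mul x (sq x).
Proof.
have fix_x : Lin (inv x) x x = x by rewrite LinVx linv_mul_sq.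
by rewrite -LinVx !LinM fix_x.
Qed.

Hypothesis oddQ : odd #|T|.

Lemma sq_surj z : exists y, sq y = z.
Proof.
have divK : involutive (ldiv^~ z).
  by move=> x; rewrite -{2}[z](ldivK x) mulC mulKl.
by have [x fix_x] := involutive_fixpoint divK oddQ; exists x; rewrite -{2}fix_x ldivK.
Qed.

Lemma sqrtK z : sq (sqrt mul z) = z.
Proof.
rewrite /sqrt; case: pickP => [w /eqP // | no_root].
by have [y yz] := sq_surj z; move: (no_root y); rewrite yz eqxx.
Qed.

Lemma sq_sqrtK y : sqrt mul (sq y) = y.
Proof.
have sqrt_inj : injective (sqrt mul) by move=> a b /(congr1 (fun w => sq w)); rewrite !sqrtK.
have [sq' sqrt_sq' sq'_sqrt] := injF_bij sqrt_inj.
by rewrite -(sq'_sqrt y) sqrtK.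
Qed.

Local Notation circ := (circ mul one).

Lemma circ_sq x y : sq (circ x y) = ldiv (inv x) (mul x (sq y)).
Proof. exact: sqrtK. Qed.

Lemma circxx x : circ x x = sq x.
Proof. by rewrite /circ -linv_mul_mul_sq mulKl mul_mul_sq sq_sqrtK. Qed.

Lemma circxV x : circ x (inv x) = one.
Proof.
rewrite /circ -{2}[x]linvK linv_mul_sq -[X in ldiv _ X](mulx1 (inv x)) mulKl.
by rewrite -{1}(mulx1 one) sq_sqrtK.
Qed.

Lemma circ1x y : circ one y = y.
Proof. by rewrite /circ linv1 mul1x ldiv1x sq_sqrtK. Qed.

Section CircSubloop.
Variable K : {set T}.
Hypothesis subK_circ : is_subloop circ K.
Hypothesis InnK_stable : forall phi, phi \in Inn mul one :&: Lgen mul K -> phi @: K = K.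

Lemma circ_subloop1 : one \in K.
Proof.
case: subK_circ => /set0Pn[k kK] _ _ divr.
exact: (divr k k one kK kK (circ1x k)).
Qed.

Lemma circ_subloopV x : x \in K -> inv x \in K.
Proof.
by case: subK_circ => _ _ divl _ xK; apply: (divl x one) (circxV x); rewrite ?circ_subloop1.
Qed.

Lemma circ_subloop_sq x : x \in K -> sq x \in K.
Proof. by case: subK_circ => _ mulK _ _ xK; rewrite -circxx mulK. Qed.

Lemma circ_subloop_sqrt k : k \in K -> sqrt mul k \in K.
Proof.
have sq_inj : injective (fun y => sq y) := can_inj sq_sqrtK.
by rewrite -{1}(inj_stable_imset sq_inj circ_subloop_sq) => /imsetP[j jK ->]; rewrite sq_sqrtK.
Qed.

Lemma circ_subloop_ldivV x k : x \in K -> k \in K -> ldiv (inv x) (mul x k) \in K.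
Proof.
case: subK_circ => _ mulK _ _ xK kK.
by rewrite -(sqrtK k) -circ_sq circ_subloop_sq // mulK // circ_subloop_sqrt.
Qed.

Lemma circ_subloop_Lin x y : x \in K -> y \in K -> mul x y \in K -> Lin x y @: K = K.
Proof. by move=> xK yK xyK; rewrite InnK_stable // inE Lin_Inn Lin_Lgen. Qed.

Lemma circ_subloop_mul_mul x k : x \in K -> k \in K -> mul x (mul x k) \in K.
Proof.
move=> xK kK; have xxVK : mul x (inv x) \in K by rewrite mulxV circ_subloop1.
rewrite -(circ_subloop_Lin xK (circ_subloopV xK) xxVK) -[mul x k](ldivK (inv x)) -LinxV.
by rewrite imset_f ?circ_subloop_ldivV.
Qed.

Lemma circ_subloop_mul_sq x k : x \in K -> k \in K -> mul (sq x) k \in K.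
Proof.
move=> xK kK; rewrite -(circ_subloop_Lin xK xK (circ_subloop_sq xK)) in kK.
by case/imsetP: kK => j jK ->; rewrite LinE ldivK circ_subloop_mul_mul.
Qed.

Lemma circ_subloop_mul x y : x \in K -> y \in K -> mul x y \in K.
Proof. by move=> xK yK; rewrite -(sqrtK x) circ_subloop_mul_sq ?circ_subloop_sqrt. Qed.

Lemma circ_subloop_is_subloop : is_subloop mul K.
Proof.
have divl x y z : x \in K -> y \in K -> mul x z = y -> z \in K.
  move=> xK yK xz_y; rewrite -xz_y in yK.
  rewrite -(inj_stable_imset (@mulI x) (fun=> circ_subloop_mul xK)) in yK.
  by rewrite (mem_imset _ _ (@mulI x)) in yK.
split=> [||x y z | x y z]; first by case: subK_circ.
- exact: circ_subloop_mul.
- exact: divl.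
- by rewrite mulC; apply: divl.
Qed.

End CircSubloop.
End AutomorphicInnerMappings.
End CommutativeLoop.

Theorem lemma3p9 (T : finType) (mul : T -> T -> T) (one : T)
  (HQ : is_comm_Aloop mul one) (Hodd : odd #|T|) (K : {set T})
  (HK : is_subloop (circ mul one) K) :
  is_subloop mul K <->
  (forall phi, phi \in Inn mul one :&: Lgen mul K -> phi @: K = K).
Proof.
case: HQ => loopQ mulC InnA; split.
- by move=> subK phi /setIP[_]; apply: (subloop_Lgen_stable loopQ subK).
- exact: circ_subloop_is_subloop.
Qed.
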